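(* Let $p=p(n)$ and $k=k(n)$ satisfy $p\ge 10^6\log n/n$ and $pk\le 10^{-3}$. Then for any $k$-bounded edge colouring $\phi$ of $K_n$, with probability $1-o(1)$ (as $n\to\infty$) every vertex $v$ of $\Gamma=G(n,p)$ satisfies $\deg_{\Gamma(\phi)}(v)\ge\frac23\deg_\Gamma(v)$.
   Context: $G(n,p)$ is the random graph on $[n]$ with each edge present independently with probability $p$; here it is viewed as a random subgraph of $K_n$. An edge colouring $\phi$ of $K_n$ is $k$-bounded if no colour is used on more than $k$ edges. For a subgraph $\Gamma\subseteq K_n$, $\Gamma(\phi)$ denotes the graph obtained from $\Gamma$ by deleting every edge of $\Gamma$ whose colour under $\phi$ appears on more than one edge of $\Gamma$. *)

From HB Require Import structures.
From mathcomp Require Import all_boot all_order all_algebra.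
From mathcomp Require Import reals exp.
Set Implicit Arguments. Unset Strict Implicit. Unset Printing Implicit Defensive.
Import Order.TTheory GRing.Theory Num.Theory.
Local Open Scope ring_scope.

(* An edge of K_n on vertex set 'I_n is a 2-element subset of 'I_n.
   A subgraph of K_n is a set of such edges. *)
Definition Kedges (n : nat) : {set {set 'I_n}} :=
  [set e : {set 'I_n} | #|e| == 2%N].

Definition colouring (n : nat) := {set 'I_n} -> nat.

Definition k_bounded (n k : nat) (phi : colouring n) : Prop :=
  forall c : nat, (#|[set e in Kedges n | phi e == c]| <= k)%N.

Definition rainbow_part (n : nat) (phi : colouring n) (G : {set {set 'I_n}})
  : {set {set 'I_n}} :=
  [set e in G | #|[set f in G | phi f == phi e]| == 1%N].

Definition deg (n : nat) (G : {set {set 'I_n}}) (v : 'I_n) : nat :=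
  #|[set e in G | v \in e]|.

(* Probability that G(n,p) (a random subgraph of K_n, each edge kept
   independently with probability p) satisfies the event A. *)
Definition Gnp_prob (R : realType) (n : nat) (p : R)
  (A : {set {set 'I_n}} -> bool) : R :=
  \sum_(G : {set {set 'I_n}} | (G \subset Kedges n) && A G)
     p ^+ #|G| * (1 - p) ^+ (#|Kedges n| - #|G|).

Definition good_event (n : nat) (phi : colouring n) (G : {set {set 'I_n}}) : bool :=
  [forall v : 'I_n, 2 * deg G v <= 3 * deg (rainbow_part phi G) v]%N.

From HB Require Import structures.
From mathcomp Require Import all_boot all_order all_algebra.
From mathcomp Require Import reals exp sequences.
From mathcomp Require Import ring lra.
Import Order.TTheory GRing.Theory Num.Theory.
Local Open Scope ring_scope.
Set Implicit Arguments. Unset Strict Implicit. Unset Printing Implicit Defensive.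

(* Markov's inequality for an exponential moment.  For a vertex [v] the weight
   [4 ^ deg_G v / 8 ^ deg_{G(phi)} v] is at least 1 whenever [v] violates the
   degree condition.  It is multiplicative over colour classes, and the edges
   of distinct classes are independent, so its mean factorises over the
   classes.  On a class [b] of at most [k] edges the weight is [(1/2) ^ deg]
   when [G] meets [b] in one edge, and otherwise at most [4 ^ |G :&: b|] times
   the indicator that two given edges of [b] (one at [v]) are present; as
   [p k <= 10^-3] the mean over [b] is at most [exp (-2/5 p deg_b v)].  Hence
   the mean is at most [exp (-2/5 p (n - 1)) <= n^-2], and a union bound over
   the [n] vertices leaves a failure probability of at most [1/n]. *)

Section SubsetSums.
Variable T : finType.

Lemma big_subset_setU (R : Type) (idx : R) (op : Monoid.com_law idx)
    (A B : {set T}) (F : {set T} -> R) : [disjoint A & B] ->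
  \big[op/idx]_(S : {set T} | S \subset A :|: B) F S =
  \big[op/idx]_(S1 : {set T} | S1 \subset A)
     \big[op/idx]_(S2 : {set T} | S2 \subset B) F (S1 :|: S2).
Proof.
move=> dAB; rewrite pair_big_dep (reindex_onto (fun q => q.1 :|: q.2)
  (fun S => (S :&: A, S :&: B))) /= => [|S sSAB]; last by rewrite -setIUr (setIidPl sSAB).
apply: eq_bigl => -[S1 S2] /=; rewrite xpair_eqE.
apply/andP/andP => [[_ /andP[/eqP <- /eqP <-]] | [sS1 sS2]]; first by rewrite !subsetIr.
have dS1B : [disjoint S1 & B] by apply: disjointWl dAB.
have dS2A : [disjoint S2 & A] by rewrite disjoint_sym in dAB; apply: disjointWl dAB.
rewrite setUSS // !setIUl (setIidPl sS1) (setIidPl sS2).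
by rewrite (disjoint_setI0 dS1B) (disjoint_setI0 dS2A) setU0 set0U !eqxx.
Qed.

Lemma big_subset1 (R : Type) (idx : R) (op : Monoid.com_law idx) (x : T) (F : {set T} -> R) :
  \big[op/idx]_(S : {set T} | S \subset [set x]) F S = op (F set0) (F [set x]).
Proof.
rewrite (eq_bigl (mem (powerset [set x]))) => [|S]; last by rewrite /= powersetE.
rewrite powerset1 big_setU1 ?big_set1 //= !inE eq_sym; apply/eqP => /setP /(_ x).
by rewrite !inE eqxx.
Qed.
End SubsetSums.

Section BernoulliSubset.
Variables (R : numDomainType) (T : finType) (p : R).

Definition bern_weight (A S : {set T}) : R :=
  \prod_(x in A) (if x \in S then p else 1 - p).

Definition bern_mean (A : {set T}) (f : {set T} -> R) : R :=
  \sum_(S : {set T} | S \subset A) bern_weight A S * f S.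

Lemma bern_weightE (A S : {set T}) : S \subset A ->
  bern_weight A S = p ^+ #|S| * (1 - p) ^+ (#|A| - #|S|).
Proof.
move=> sSA; rewrite /bern_weight (big_setID S) /= (setIidPr sSA).
rewrite (eq_bigr (fun=> p)) => [|x ->//]; rewrite prodr_const.
rewrite (eq_bigr (fun=> 1 - p)) => [|x /setDP[_ /negbTE->]//].
by rewrite prodr_const cardsD (setIidPr sSA).
Qed.

Lemma bern_weight_setU (A B S1 S2 : {set T}) :
  [disjoint A & B] -> S1 \subset A -> S2 \subset B ->
  bern_weight (A :|: B) (S1 :|: S2) = bern_weight A S1 * bern_weight B S2.
Proof.
move=> dAB sS1 sS2; rewrite /bern_weight (eq_bigl [predU A & B]) ?bigU //= => [|x].
  congr (_ * _); apply: eq_bigr => x x_in; rewrite in_setU.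
    by rewrite (contraFF (subsetP sS2 x) (disjointFr dAB x_in)) orbF.
  by rewrite disjoint_sym in dAB; rewrite (contraFF (subsetP sS1 x) (disjointFr dAB x_in)).
by rewrite !inE.
Qed.

Lemma bern_mean_setU (A B : {set T}) (f g h : {set T} -> R) : [disjoint A & B] ->
  (forall S1 S2 : {set T}, S1 \subset A -> S2 \subset B -> h (S1 :|: S2) = f S1 * g S2) ->
  bern_mean (A :|: B) h = bern_mean A f * bern_mean B g.
Proof.
move=> dAB hfg; rewrite /bern_mean big_subset_setU // big_distrlr /=.
apply: eq_bigr => S1 sS1; apply: eq_bigr => S2 sS2.
by rewrite bern_weight_setU // hfg // mulrACA.
Qed.

Lemma bern_mean_set0 (f : {set T} -> R) : bern_mean set0 f = f set0.
Proof.
rewrite /bern_mean (eq_bigl (pred1 set0)) => [|S]; last by rewrite /= subset0.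
by rewrite big_pred1_eq /bern_weight big_set0 mul1r.
Qed.

Lemma bern_mean_set1 (x : T) (f : {set T} -> R) :
  bern_mean [set x] f = (1 - p) * f set0 + p * f [set x].
Proof. by rewrite /bern_mean big_subset1 /bern_weight !big_set1 in_set0 set11. Qed.

Lemma bern_mean_prod (A : {set T}) (u : T -> bool -> R) :
  bern_mean A (fun S => \prod_(x in A) u x (x \in S)) =
  \prod_(x in A) ((1 - p) * u x false + p * u x true).
Proof.
have [m] := ubnP #|A|; elim: m A => // m IH A.
have [-> _|[x xA] ltAm] := set_0Vmem A; first by rewrite bern_mean_set0 !big_set0.
have xA' : x \notin A :\ x by rewrite setD11.
rewrite -(setD1K xA) big_setU1 //= -IH; last by rewrite -ltnS (cardsD1 x A) xA in ltAm.
have -> : (1 - p) * u x false + p * u x true = bern_mean [set x] (fun S => u x (x \in S)).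
  by rewrite bern_mean_set1 in_set0 set11.
apply: bern_mean_setU; first by rewrite disjoints1.
move=> S1 S2 sS1 sS2.
have xS2 : x \notin S2 by apply: contra xA'; apply: (subsetP sS2).
rewrite big_setU1 //= in_setU (negbTE xS2) orbF; congr (_ * _); apply: eq_bigr => y yA'.
rewrite in_setU; case: (boolP (y \in S1)) => // /(subsetP sS1) /set1P yx.
by rewrite yx setD11 in yA'.
Qed.

Lemma bern_mean1 (A : {set T}) : bern_mean A (fun=> 1) = 1.
Proof.
have := bern_mean_prod A (fun _ _ => 1).
rewrite [in RHS]big1 => [|x _]; last by rewrite !mulr1 subrK.
by apply: etrans; apply: eq_bigr => S _; rewrite big1.
Qed.

Lemma bern_meanD (A : {set T}) (f g : {set T} -> R) :
  bern_mean A (fun S => f S + g S) = bern_mean A f + bern_mean A g.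
Proof. by rewrite /bern_mean -big_split; apply: eq_bigr => S _; rewrite mulrDr. Qed.

Lemma bern_mean_sum (I : finType) (P : pred I) (A : {set T}) (F : I -> {set T} -> R) :
  bern_mean A (fun S => \sum_(i | P i) F i S) = \sum_(i | P i) bern_mean A (F i).
Proof.
rewrite /bern_mean exchange_big; apply: eq_bigr => S _; exact: mulr_sumr.
Qed.

Hypothesis p01 : 0 <= p <= 1.

Lemma bern_weight_ge0 (A S : {set T}) : 0 <= bern_weight A S.
Proof. by case/andP: p01 => p0 p1; apply: prodr_ge0 => x _; case: ifP; rewrite ?subr_ge0. Qed.

Lemma ler_bern_mean (A : {set T}) (f g : {set T} -> R) :
  (forall S : {set T}, S \subset A -> f S <= g S) -> bern_mean A f <= bern_mean A g.
Proof.
by move=> le_fg; apply: ler_sum => S sSA; rewrite ler_wpM2l ?bern_weight_ge0 ?le_fg.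
Qed.

Lemma bern_mean_ge0 (A : {set T}) (f : {set T} -> R) :
  (forall S : {set T}, S \subset A -> 0 <= f S) -> 0 <= bern_mean A f.
Proof. by move=> f_ge0; apply: sumr_ge0 => S sSA; rewrite mulr_ge0 ?bern_weight_ge0 ?f_ge0. Qed.

End BernoulliSubset.

Section DegreeTilt.
Variables (R : numFieldType) (n : nat) (phi : colouring n) (v : 'I_n).
Notation graph := {set {set 'I_n}}.

Lemma deg_set0 : deg (set0 : graph) v = 0%N.
Proof. by apply/eqP; rewrite cards_eq0; apply/eqP/setP => e; rewrite !inE. Qed.

Lemma deg_setU (G1 G2 : graph) : [disjoint G1 & G2] ->
  deg (G1 :|: G2) v = (deg G1 v + deg G2 v)%N.
Proof.
rewrite /deg => dG; have sub (G : graph) : [set e in G | v \in e] \subset G.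
  by apply/subsetP => e; rewrite inE => /andP[].
have -> : [set e in G1 :|: G2 | v \in e] = [set e in G1 | v \in e] :|: [set e in G2 | v \in e].
  by apply/setP => e; rewrite !inE andb_orl.
rewrite -cardsUI disjoint_setI0 ?cards0 ?addn0 //.
apply: disjointWl (sub G1) _; rewrite disjoint_sym.
by apply: disjointWl (sub G2) _; rewrite disjoint_sym.
Qed.

Lemma rainbow_part_sub (G : graph) : rainbow_part phi G \subset G.
Proof. by apply/subsetP => e; rewrite inE => /andP[]. Qed.

Lemma rainbow_part_setU (G1 G2 : graph) :
  (forall e f, e \in G1 -> f \in G2 -> phi e != phi f) ->
  rainbow_part phi (G1 :|: G2) = rainbow_part phi G1 :|: rainbow_part phi G2.
Proof.
move=> sep.
have class1 e : e \in G1 ->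
    [set f in G1 :|: G2 | phi f == phi e] = [set f in G1 | phi f == phi e].
  move=> eG1; apply/setP => f; rewrite !inE; case: (boolP (f \in G2)) => [fG2|]; last first.
    by rewrite orbF.
  by rewrite eq_sym (negbTE (sep e f eG1 fG2)) !andbF.
have class2 e : e \in G2 ->
    [set f in G1 :|: G2 | phi f == phi e] = [set f in G2 | phi f == phi e].
  move=> eG2; apply/setP => f; rewrite !inE.
  by case: (boolP (f \in G1)) => [fG1|_] //=; rewrite (negbTE (sep f e fG1 eG2)) andbF.
apply/setP => e; rewrite !inE; case: (boolP (e \in G1)) => [eG1|_] /=.
  have eG2 : e \notin G2 by apply/negP => /(sep e e eG1); rewrite eqxx.
  by rewrite class1 // (negbTE eG2) orbF.
by case: (boolP (e \in G2)) => //= eG2; rewrite class2.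
Qed.

Lemma rainbow_part_monochromatic (S : graph) (c : nat) : {in S, forall e, phi e = c} ->
  rainbow_part phi S = if #|S| == 1%N then S else set0.
Proof.
move=> Sc; apply/setP => e; rewrite inE; case: (boolP (e \in S)) => [eS|eS] /=.
  rewrite (_ : [set f in S | phi f == phi e] = S); first by case: ifP; rewrite ?eS ?inE.
  by apply/setP => f; rewrite inE; case: (boolP (f \in S)) => // fS; rewrite !Sc ?eqxx.
by case: ifP; rewrite ?inE // (negbTE eS).
Qed.

(* [4 ^ d / 8 ^ r = 2 ^ (2 d - 3 r)] is at least 1 exactly when [v] violates
   the degree condition, and it is multiplicative over colour classes. *)
Definition deg_tilt (G : graph) : R := 4 ^+ deg G v / 8 ^+ deg (rainbow_part phi G) v.

Lemma deg_tilt_ge0 (G : graph) : 0 <= deg_tilt G.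
Proof. by rewrite divr_ge0 ?exprn_ge0. Qed.

Lemma deg_tilt_set0 : deg_tilt set0 = 1.
Proof.
have rb0 : rainbow_part phi set0 = set0 by apply/setP => e; rewrite !inE.
by rewrite /deg_tilt rb0 deg_set0 !expr0 divr1.
Qed.

Lemma deg_tilt_ge1 (G : graph) :
  ~~ (2 * deg G v <= 3 * deg (rainbow_part phi G) v)%N -> 1 <= deg_tilt G.
Proof.
rewrite -ltnNge /deg_tilt ler_pdivlMr ?exprn_gt0 // mul1r => /ltnW.
have -> : (8 : R) = 2 ^+ 3 by rewrite -natrX.
have -> : (4 : R) = 2 ^+ 2 by rewrite -natrX.
by rewrite -!exprM; apply: ler_weXn2l; rewrite ler1n.
Qed.

Lemma deg_tilt_setU (G1 G2 : graph) :
  (forall e f, e \in G1 -> f \in G2 -> phi e != phi f) ->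
  deg_tilt (G1 :|: G2) = deg_tilt G1 * deg_tilt G2.
Proof.
move=> sep.
have dG : [disjoint G1 & G2].
  by apply/pred0P => e /=; apply/negP => /andP[/sep eG1 /eG1]; rewrite eqxx.
have dR : [disjoint rainbow_part phi G1 & rainbow_part phi G2].
  apply: disjointWl (rainbow_part_sub G1) _; rewrite disjoint_sym.
  by apply: disjointWl (rainbow_part_sub G2) _; rewrite disjoint_sym.
by rewrite /deg_tilt rainbow_part_setU // !deg_setU // !exprD invfM mulrACA.
Qed.
End DegreeTilt.

Section MonochromaticClass.
Variables (R : realFieldType) (n : nat) (phi : colouring n) (v : 'I_n).
Variables (b : {set {set 'I_n}}) (c : nat).
Hypothesis b_monochromatic : {in b, forall e, phi e = c}.

(* [halving S = 2 ^- deg S v] and [pair_term e f S = 4 ^ |S| [e, f \in S]]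
   (see [halvingE], [pair_termE]), written as products over [b] so that their
   means factorise by [bern_mean_prod]. *)
Definition halving (S : {set {set 'I_n}}) : R :=
  \prod_(x in b) (if (x \in S) && (v \in x) then 2^-1 else 1).

Definition pair_term (e f : {set 'I_n}) (S : {set {set 'I_n}}) : R :=
  \prod_(x in b) (if x \in S then 4 else ((x != e) && (x != f))%:R).

Lemma halvingE (S : {set {set 'I_n}}) : S \subset b -> halving S = 2^-1 ^+ deg S v.
Proof.
move=> sSb; rewrite /halving -big_mkcondr /= -prodr_const /deg.
apply: eq_bigl => x; rewrite inE andbA; case: (boolP (x \in S)) => [/(subsetP sSb)->|] //.
by rewrite andbF.
Qed.

Lemma pair_termE (e f : {set 'I_n}) (S : {set {set 'I_n}}) :
  e \in S -> f \in S -> S \subset b -> pair_term e f S = 4 ^+ #|S|.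
Proof.
move=> eS fS sSb; rewrite /pair_term -prodr_const (big_setID S) /= (setIidPr sSb).
rewrite [X in _ * X]big1 ?mulr1 => [|x /setDP[_ xS]]; last first.
  have xe : x != e by apply: contraNneq xS => ->.
  have xf : x != f by apply: contraNneq xS => ->.
  by rewrite (negbTE xS) xe xf.
by apply: eq_bigr => x ->.
Qed.

Lemma pair_term_ge0 (e f : {set 'I_n}) (S : {set {set 'I_n}}) : 0 <= pair_term e f S.
Proof. by apply: prodr_ge0 => x _; case: ifP. Qed.

Lemma deg_tilt_monochromatic_le (S : {set {set 'I_n}}) : S \subset b ->
  deg_tilt R phi v S <=
  halving S + \sum_(e in b | v \in e) \sum_(f in b | f != e) pair_term e f S.
Proof.
move=> sSb; have pairs_ge0 : 0 <= \sum_(e in b | v \in e) \sum_(f in b | f != e) pair_term e f S.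
  by do 2![apply: sumr_ge0 => ? _]; apply: pair_term_ge0.
have S_mono : {in S, forall e, phi e = c} by move=> e /(subsetP sSb); apply: b_monochromatic.
rewrite /deg_tilt (rainbow_part_monochromatic S_mono) halvingE //.
case: eqP => [_|S_ne1].
  by rewrite -expr_div_n (_ : 4 / 8 = 2^-1 :> R) ?lerDl //; field.
rewrite deg_set0 expr0 divr1.
have [->|/card_gt0P[e]] := posnP (deg S v); first by rewrite !expr0 lerDl.
rewrite inE => /andP[eS ve].
have : #|S :\ e| != 0%N by apply/eqP => S_e0; apply: S_ne1; rewrite (cardsD1 e) eS S_e0.
rewrite -lt0n => /card_gt0P[f]; rewrite !inE => /andP[fe fS].
have [eb fb] := (subsetP sSb e eS, subsetP sSb f fS).
apply: (@le_trans _ _ (pair_term e f S)).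
  rewrite pair_termE //; apply: ler_weXn2l; first by rewrite ler1n.
  by apply: subset_leq_card; apply/subsetP => x; rewrite inE => /andP[].
rewrite ler_wpDl ?exprn_ge0 ?invr_ge0 // (bigD1 e) ?eb ?ve //= (bigD1 f) ?fb ?fe //=.
rewrite -addrA lerDl addr_ge0 ?sumr_ge0 // => [x _|x _]; first exact: pair_term_ge0.
by apply: sumr_ge0 => y _; apply: pair_term_ge0.
Qed.

Variable p : R.

Lemma bern_mean_halving : bern_mean p b halving = (1 - p / 2) ^+ deg b v.
Proof.
rewrite (bern_mean_prod p b (fun x s => if s && (v \in x) then 2^-1 else 1)) /deg.
rewrite -prodr_const (big_setID [set e : {set 'I_n} | v \in e]) /= [X in _ * X]big1 ?mulr1.
  apply: eq_big => [x|x]; first by rewrite !inE andbC.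
  by rewrite !inE => /andP[_ ->]; lra.
by move=> x /setDP[_]; rewrite inE => /negbTE ->; rewrite mulr1 subrK.
Qed.

Hypothesis p01 : 0 <= p <= 1.

Lemma bern_mean_pair_term (e f : {set 'I_n}) : e \in b -> f \in b -> f != e ->
  bern_mean p b (pair_term e f) <= 16 * p ^+ 2 * (1 + 3 * p) ^+ #|b|.
Proof.
have [p0 p1] := andP p01; move=> eb fb fe.
rewrite (bern_mean_prod p b (fun x s => if s then 4 else ((x != e) && (x != f))%:R)) /=.
rewrite (bigD1 e) //= (bigD1 f) /=; last by rewrite fb fe.
rewrite eqxx fe eqxx andbF !mulr0 !add0r mulrA (_ : p * 4 * (p * 4) = 16 * p ^+ 2); last by ring.
rewrite ler_wpM2l ?mulr_ge0 ?exprn_ge0 //.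
rewrite (eq_bigr (fun=> 1 + 3 * p)) => [|x /andP[/andP[_ ->] ->]]; last by rewrite mulr1; lra.
rewrite prodr_const ler_weXn2l //; first by lra.
by apply: subset_leq_card; apply/subsetP => x /andP[/andP[]].
Qed.

Lemma bern_mean_deg_tilt_monochromatic_le :
  bern_mean p b (deg_tilt R phi v) <=
  (1 - p / 2) ^+ deg b v + (deg b v)%:R * (#|b|%:R * (16 * p ^+ 2 * (1 + 3 * p) ^+ #|b|)).
Proof.
have [p0 p1] := andP p01; set X := 16 * p ^+ 2 * _.
have X_ge0 : 0 <= X by rewrite !mulr_ge0 ?exprn_ge0 //; lra.
apply: le_trans (ler_bern_mean p01 deg_tilt_monochromatic_le) _.
rewrite bern_meanD bern_mean_halving lerD2l bern_mean_sum.
have -> : (deg b v)%:R * (#|b|%:R * X) = \sum_(e in b | v \in e) #|b|%:R * X.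
  by rewrite sumr_const mulr_natl /deg; congr (_ *+ _); apply: eq_card => e; rewrite inE.
apply: ler_sum => e /andP[eb _]; rewrite bern_mean_sum.
have -> : #|b|%:R * X = \sum_(f in b) X by rewrite sumr_const mulr_natl.
apply: le_trans (_ : \sum_(f in b | f != e) X <= _).
  by apply: ler_sum => f /andP[fb fe]; apply: bern_mean_pair_term.
by rewrite [leRHS](bigID (fun f => f != e)) lerDl sumr_ge0.
Qed.
End MonochromaticClass.

Section Estimates.
Variable R : realFieldType.

Lemma expr1B_le_quadratic (q : R) (a : nat) : 0 <= q <= 1 ->
  (1 - q) ^+ a <= 1 - a%:R * q + (a%:R * q) ^+ 2 / 2.
Proof.
case/andP => q0 q1; elim: a => [|a IH]; first by rewrite !mul0r expr0n /=; lra.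
rewrite exprS -natr1; have a0 : 0 <= a%:R :> R := ler0n _ a.
apply: le_trans (_ : (1 - q) * (1 - a%:R * q + (a%:R * q) ^+ 2 / 2) <= _).
  by rewrite ler_wpM2l // subr_ge0.
have aq3 : 0 <= a%:R ^+ 2 * q ^+ 3 by rewrite mulr_ge0 ?exprn_ge0.
have q2 : 0 <= q ^+ 2 by rewrite exprn_ge0.
(* both sides expanded in powers of [q]; they differ by [q^2/2 + a^2 q^3/2] *)
suff : 0 <= q ^+ 2 / 2 + a%:R ^+ 2 * q ^+ 3 / 2.
  set d := _ + _ => d0; have -> : 1 - (a%:R + 1) * q + ((a%:R + 1) * q) ^+ 2 / 2 =
    (1 - q) * (1 - a%:R * q + (a%:R * q) ^+ 2 / 2) + d by rewrite /d; field.
  by rewrite lerDl.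
lra.
Qed.

Lemma expr1D_le2 (x : R) (m : nat) : 0 <= x -> m%:R * x <= 2^-1 -> (1 + x) ^+ m <= 2.
Proof.
move=> x0 mx; have Bernoulli k : (1 + x) ^+ k * (1 - k%:R * x) <= 1.
  elim: k => [|k IH]; first by rewrite expr0 mul0r subr0 mul1r.
  have Z0 : 0 <= (1 + x) ^+ k by rewrite exprn_ge0 // addr_ge0.
  have Zx : 0 <= (1 + x) ^+ k * ((k%:R + 1) * x ^+ 2) by rewrite !mulr_ge0 ?exprn_ge0 ?addr_ge0.
  have -> : (1 + x) ^+ k.+1 * (1 - k.+1%:R * x) =
    (1 + x) ^+ k * (1 - k%:R * x) - (1 + x) ^+ k * ((k%:R + 1) * x ^+ 2).
    by rewrite exprS -natr1; ring.
  lra.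
have := Bernoulli m; have Z0 : 0 <= (1 + x) ^+ m by rewrite exprn_ge0 // addr_ge0.
have : (1 + x) ^+ m * 2^-1 <= (1 + x) ^+ m * (1 - m%:R * x) by rewrite ler_wpM2l //; lra.
lra.
Qed.

Lemma monochromatic_class_estimate (p : R) (a m : nat) :
  0 <= p <= 1 -> p * m%:R <= 1000^-1 -> (a <= m)%N ->
  (1 - p / 2) ^+ a + a%:R * (m%:R * (16 * p ^+ 2 * (1 + 3 * p) ^+ m))
  <= 1 - 2 / 5 * (p * a%:R).
Proof.
case/andP=> p0 p1 pm am; have [A0 AM] : 0 <= a%:R :> R /\ a%:R <= m%:R :> R.
  by rewrite ler0n ler_nat.
have M0 : 0 <= m%:R :> R := ler0n _ m.
have := @expr1B_le_quadratic (p / 2) a; have := @expr1D_le2 (3 * p) m.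
move: A0 AM M0 pm; set A := a%:R; set M := m%:R; set Z := (1 + 3 * p) ^+ m.
move=> A0 AM M0 pm /(_ ltac:(lra) ltac:(lra)) Z2 /(_ ltac:(lra)) taylor.
have Z0 : 0 <= Z by rewrite exprn_ge0 //; lra.
have y0 : 0 <= p * A by rewrite mulr_ge0.
have y1 : p * A <= 1000^-1 by apply: le_trans pm; rewrite ler_wpM2l.
have pMZ : p * M * Z <= 1000^-1 * 2 by rewrite ler_pM ?mulr_ge0.
have -> : A * (M * (16 * p ^+ 2 * Z)) = 16 * (p * A) * (p * M * Z) by ring.
have e2 : 1 - A * (p / 2) + (A * (p / 2)) ^+ 2 / 2 = 1 - p * A / 2 + (p * A) * (p * A) / 8.
  by field.
have : 16 * (p * A) * (p * M * Z) <= 16 * (p * A) * (1000^-1 * 2) by rewrite ler_wpM2l ?mulr_ge0.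
have : (p * A) * (p * A) <= (p * A) * 1000^-1 by rewrite ler_wpM2l.
lra.
Qed.
End Estimates.

Section TiltBound.
Variables (R : realType) (n : nat) (phi : colouring n) (v : 'I_n) (p : R) (m : nat).
Hypotheses (p01 : 0 <= p <= 1) (pm : p * m%:R <= 1000^-1).

Lemma bern_mean_deg_tilt_monochromatic_le_expR (b : {set {set 'I_n}}) (c : nat) :
  {in b, forall e, phi e = c} -> (#|b| <= m)%N ->
  bern_mean p b (deg_tilt R phi v) <= expR (- (2 / 5 * (p * (deg b v)%:R))).
Proof.
move=> b_monochromatic bm; have [p0 p1] := andP p01.
apply: le_trans (bern_mean_deg_tilt_monochromatic_le v b_monochromatic p01) _.
apply: le_trans (monochromatic_class_estimate p01 _ (_ : deg b v <= #|b|)%N) _.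
- by apply: le_trans pm; rewrite ler_wpM2l // ler_nat.
- by apply: subset_leq_card; apply/subsetP => e; rewrite inE => /andP[].
- exact: expR_ge1Dx.
Qed.

Lemma bern_mean_deg_tilt_le_expR (A : {set {set 'I_n}}) :
  (forall c, #|[set e in A | phi e == c]| <= m)%N ->
  bern_mean p A (deg_tilt R phi v) <= expR (- (2 / 5 * (p * (deg A v)%:R))).
Proof.
have [N] := ubnP #|A|; elim: N A => // N IH A ltAN Am.
have [->|[e0 e0A]] := set_0Vmem A.
  by rewrite bern_mean_set0 deg_tilt_set0 deg_set0 !mulr0 oppr0 expR0.
set b := [set e in A | phi e == phi e0]; set A' := [set e in A | phi e != phi e0].
have defA : A = b :|: A'.
  by apply/setP => e; rewrite !inE -andb_orr orbN andbT.
have sep e f : e \in b -> f \in A' -> phi e != phi f.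
  by rewrite !inE => /andP[_ /eqP->] /andP[_]; rewrite eq_sym.
have dbA' : [disjoint b & A'].
  by apply/pred0P => e /=; apply/negP => /andP[/sep eb /eb]; rewrite eqxx.
rewrite defA (bern_mean_setU _ dbA' (f := deg_tilt R phi v) (g := deg_tilt R phi v)); last first.
  move=> S1 S2 sS1 sS2; apply: deg_tilt_setU => e f eS1 fS2.
  exact: sep (subsetP sS1 e eS1) (subsetP sS2 f fS2).
rewrite deg_setU // natrD !mulrDr opprD expRD ler_pM ?bern_mean_ge0 //.
- by move=> S _; apply: deg_tilt_ge0.
- by move=> S _; apply: deg_tilt_ge0.
- apply: (@bern_mean_deg_tilt_monochromatic_le_expR _ (phi e0)); last exact: Am.
  by move=> e; rewrite inE => /andP[_ /eqP].
apply: IH => [|c]; last first.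
  apply: leq_trans (Am c); apply: subset_leq_card; apply/subsetP => e.
  by rewrite !inE => /andP[/andP[]] ->.
rewrite -ltnS (leq_trans _ ltAN) // ltnS; apply: proper_card; apply/properP; split.
  by apply/subsetP => e; rewrite inE => /andP[].
by exists e0; rewrite // inE eqxx andbF.
Qed.
End TiltBound.

Section RandomGraph.
Variables (R : realType) (n : nat) (p : R).
Notation graph := {set {set 'I_n}}.

Lemma Gnp_probE (E : graph -> bool) :
  Gnp_prob p E = \sum_(G : graph | (G \subset Kedges n) && E G) bern_weight p (Kedges n) G.
Proof. by apply: eq_bigr => G /andP[sGK _]; rewrite bern_weightE. Qed.

Lemma Gnp_probC (E : graph -> bool) : Gnp_prob p E + Gnp_prob p (fun G => ~~ E G) = 1.
Proof.
rewrite !Gnp_probE -(bern_mean1 p (Kedges n)) /bern_mean [RHS](bigID E) /=.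
by congr (_ + _); apply: eq_bigr => G _; rewrite mulr1.
Qed.

Lemma Gnp_prob_le_bern_mean (E : graph -> bool) (f : graph -> R) : 0 <= p <= 1 ->
  (forall G, 0 <= f G) -> (forall G, E G -> 1 <= f G) ->
  Gnp_prob p E <= bern_mean p (Kedges n) f.
Proof.
move=> p01 f_ge0 Ef; rewrite Gnp_probE /bern_mean [leRHS](bigID E) /= ler_wpDr //.
  by apply: sumr_ge0 => G _; rewrite mulr_ge0 ?bern_weight_ge0.
by apply: ler_sum => G /andP[_ EG]; rewrite ler_peMr ?bern_weight_ge0 ?Ef.
Qed.
End RandomGraph.

Lemma deg_Kedges (n : nat) (v : 'I_n) : (n - 1 <= deg (Kedges n) v)%N.
Proof.
have inj : {in [set~ v] &, injective (fun u => [set v; u])}.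
  move=> u1 u2; rewrite !inE => u1v _ /setP/(_ u1); rewrite !inE eqxx orbT.
  by rewrite (negbTE u1v) => /esym/eqP.
apply: leq_trans (_ : #|[set [set v; u] | u in [set~ v]]| <= _)%N.
  by rewrite card_in_imset // cardsC1 card_ord subn1.
apply: subset_leq_card; apply/subsetP => e /imsetP[u]; rewrite !inE => uv ->.
by rewrite !inE cards2 eqxx [v == u]eq_sym uv.
Qed.

Lemma mulr_expR_decay_le (R : realType) (p eps : R) (n : nat) : (2 <= n)%N ->
  10 ^+ 6 * ln n%:R / n%:R <= p -> eps^-1 < n%:R -> 0 < eps ->
  n%:R * expR (- (2 / 5 * (p * (n - 1)%:R))) <= eps.
Proof.
move=> n2 hp hn eps0; rewrite natrB ?(leq_trans _ n2) //.
have N2 : 2 <= n%:R :> R by rewrite (ler_nat R 2 n).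
have L0 : 0 <= ln (n%:R : R) by rewrite ln_ge0 //; lra.
rewrite ler_pdivrMr in hp; last by lra.
have p0 : 0 <= p by nra.
have decay : expR (- (2 / 5 * (p * (n%:R - 1)))) <= (n%:R ^+ 2)^-1.
  have -> : (n%:R ^+ 2)^-1 = expR (- (2%:R * ln (n%:R : R))).
    by rewrite expRN expRM_natl lnK // posrE; lra.
  rewrite ler_expR lerN2; nra.
apply: le_trans (_ : n%:R * (n%:R ^+ 2)^-1 <= _); first by rewrite ler_wpM2l //; lra.
rewrite expr2 invfM mulrA mulfV ?mul1r; last by rewrite pnatr_eq0 -lt0n (leq_trans _ n2).
by rewrite -(invrK eps) lef_pV2 ?posrE ?invr_gt0 ?ltW //; lra.
Qed.

Lemma sum_deg_tilt_ge1 (R : numFieldType) (n : nat) (phi : colouring n) (G : {set {set 'I_n}}) :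
  ~~ good_event phi G -> 1 <= \sum_(w : 'I_n) deg_tilt R phi w G.
Proof.
case/forallPn => w /deg_tilt_ge1 Gw; rewrite (bigD1 w) //= ler_wpDr //.
by apply: sumr_ge0 => u _; apply: deg_tilt_ge0.
Qed.

Theorem lemma3p2 (R : realType) (p : nat -> R) (k : nat -> nat) :
  (forall n, 0 <= p n <= 1) ->
  (exists n0 : nat, forall n, (n0 <= n)%N ->
     (10 ^+ 6) * ln (n%:R) / n%:R <= p n /\ p n * (k n)%:R <= (10 ^+ 3)^-1) ->
  forall eps : R, 0 < eps ->
  exists N : nat, forall n : nat, (N <= n)%N ->
    forall phi : colouring n, k_bounded (k n) phi ->
      1 - eps <= Gnp_prob (p n) (good_event phi).
Proof.
move=> p01 [n0 hn0] eps eps0; exists (maxn (maxn n0 2) (Num.Def.archi_bound eps^-1)) => n.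
rewrite !geq_max => /andP[/andP[n0n n2] large_n] phi phi_bdd.
have [p_lb pk] := hn0 n n0n; rewrite -natrX in pk.
have := Gnp_probC (p n) (good_event phi).
suff : Gnp_prob (p n) (fun G => ~~ good_event phi G) <= eps by lra.
apply: le_trans (Gnp_prob_le_bern_mean (f := fun G => \sum_w deg_tilt R phi w G)
  (p01 n) _ (@sum_deg_tilt_ge1 R n phi)) _.
  by move=> G; apply: sumr_ge0 => w _; apply: deg_tilt_ge0.
rewrite bern_mean_sum; apply: le_trans (mulr_expR_decay_le n2 p_lb _ eps0); last first.
  by apply: lt_le_trans (archi_boundP _) _; rewrite ?ler_nat // invr_ge0 ltW.
set bound := expR _; have -> : n%:R * bound = \sum_(w : 'I_n) bound.
  by rewrite sumr_const card_ord mulr_natl.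
apply: ler_sum => w _.
apply: le_trans (bern_mean_deg_tilt_le_expR w (p01 n) pk phi_bdd) _.
rewrite /bound ler_expR lerN2 ler_pM2l ?divr_gt0 // ler_wpM2l ?ler_nat ?deg_Kedges //.
exact: (andP (p01 n)).1.
Qed.
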